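(* Suppose each $f_v$ is $K_v$-Lipschitz. Then for every partition $\mathcal P$ of $V(G)$ into sets of size $r$ and $T=T_{\vec B,\mathcal P}$, $$|\mathbb E_{\vec B}(\xi)|\le\frac1{nr(r-1)}\sum_{v\in V(G)}\frac{|\mathcal P_v\cap\mathcal N(v)|}{d(v)}K_v.$$
   Context: Let $n,p,q$ be positive integers, $r=p+q$, $G$ a finite simple graph with $|V(G)|=rn$ and no isolated vertices; $\mathcal N(v)$, $d(v)$ neighbor set and degree. For each $v$, $f_v:2^{\mathcal N(v)}\to\mathbb R$ with $f_v(\emptyset)=0$. $\sigma_T(v)=q$ if $v\in T$, $-p$ otherwise; for $|T|=pn$, $\xi=\frac1{pqn}\sum_v\sigma_T(v)f_v(T\cap\mathcal N(v))$. $f_v$ is $K_v$-Lipschitz ($K_v>0$) if $|f_v(A)-f_v(A')|\le K_v|A\triangle A'|/d(v)$ for all $A,A'\subseteq\mathcal N(v)$. Restricted randomization: for $\mathcal P=(S_1,\dots,S_n)$, $S_i=\{w_i^1,\dots,w_i^r\}$, $B_1,\dots,B_n$ i.i.d. uniform $p$-subsets of $\{1,\dots,r\}$, $T_{\vec B,\mathcal P}=\{w_i^j:j\in B_i\}$; $\mathcal P_v$ is the block containing $v$. *)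

From HB Require Import structures.
From mathcomp Require Import all_boot all_order all_algebra.
Set Implicit Arguments. Unset Strict Implicit. Unset Printing Implicit Defensive.
Import Order.TTheory GRing.Theory Num.Theory.
Local Open Scope ring_scope.

Section Defs.
Variable V : finType.

Definition nbhd (e : rel V) (v : V) : {set V} := [set u | e v u].
Definition deg (e : rel V) (v : V) : nat := #|nbhd e v|.

Definition symdiff (A B : {set V}) : {set V} := (A :\: B) :|: (B :\: A).

Variable R : realFieldType.

Definition sigma (p q : nat) (T : {set V}) (v : V) : R :=
  if v \in T then q%:R else - p%:R.

Definition xi (n p q : nat) (e : rel V) (f : V -> {set V} -> R) (T : {set V}) : R :=
  (p * q * n)%:R^-1 * \sum_(v : V) sigma p q T v * f v (T :&: nbhd e v).

Definition lipschitz (e : rel V) (fv : {set V} -> R) (Kv : R) (v : V) : Prop :=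
  forall A A' : {set V}, A \subset nbhd e v -> A' \subset nbhd e v ->
    `|fv A - fv A'| <= Kv * (#|symdiff A A'|)%:R / (deg e v)%:R.

(* The partition P = (S_1,...,S_n), S_i = {w_i^1,...,w_i^r}, is encoded by
   a bijection w : 'I_n * 'I_r -> V with w (i, j) = w_i^j. *)
Definition T_of (n r : nat) (w : 'I_n * 'I_r -> V) (B : {ffun 'I_n -> {set 'I_r}}) : {set V} :=
  [set x | [exists i : 'I_n, [exists j : 'I_r, (j \in B i) && (w (i, j) == x)]]].

Definition blockOf (n r : nat) (w : 'I_n * 'I_r -> V) (v : V) : {set V} :=
  [set u | [exists i : 'I_n, [exists j : 'I_r, [exists j' : 'I_r,
      (w (i, j) == v) && (w (i, j') == u)]]]].

Definition psubsets (n r p : nat) : {set {ffun 'I_n -> {set 'I_r}}} :=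
  [set B : {ffun 'I_n -> {set 'I_r}} | [forall i, #|B i| == p]].

(* E_B(xi) for B_i i.i.d. uniform p-subsets *)
Definition expect_xi (n p q : nat) (e : rel V) (f : V -> {set V} -> R)
    (w : 'I_n * 'I_(p + q) -> V) : R :=
  (#|psubsets n (p + q) p|)%:R^-1 *
    \sum_(B in psubsets n (p + q) p) xi n p q e f (T_of w B).
End Defs.

From HB Require Import structures.
From mathcomp Require Import all_boot all_order all_algebra all_fingroup.
From mathcomp Require Import ring zify.
Import Order.TTheory GRing.Theory Num.Theory.
Local Open Scope ring_scope.
Set Implicit Arguments. Unset Strict Implicit. Unset Printing Implicit Defensive.

(* Fix a vertex v = w (i0, j0).  Pair every outcome B with j0 in B i0 and
   j notin B i0 with the outcome obtained by exchanging j0 and j inside the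
   block i0.  The contribution of v to the sum of sigma_T(v) f_v(T :&: N(v))
   over all outcomes is then the sum, over j and over these pairs, of the
   differences f_v(T :&: N(v)) - f_v(T' :&: N(v)); since T and T' can differ
   on N(v) only at w (i0, j), each difference is at most
   K_v [w (i0, j) \in N(v)] / d(v).  By symmetry, for every j != j0 the
   outcomes B with j0 in B i0 and j notin B i0 form a fraction
   p q / (r (r - 1)) of all outcomes, and summing over j counts the
   neighbours of v in its own block. *)

Lemma sum_mem_card (T : finType) (A : {set T}) :
  (\sum_(t : T) (t \in A))%N = #|A|.
Proof. by rewrite -sum1_card [RHS]big_mkcond; apply: eq_bigr => t _; case: (t \in A). Qed.

Lemma sum_if_const (R : pzSemiRingType) (T : finType) (P : pred T) (c : R) :
  \sum_(t : T) (if P t then c else 0) = #|P|%:R * c.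
Proof. by rewrite -big_mkcond sumr_const mulr_natl. Qed.

Lemma card_symdiff_setI_le (T : finType) (A A' N : {set T}) (x : T) :
  (forall y, y \in N -> y != x -> (y \in A) = (y \in A')) ->
  (#|symdiff (A :&: N) (A' :&: N)| <= (x \in N))%N.
Proof.
move=> agree; have sub : symdiff (A :&: N) (A' :&: N) \subset [set x] :&: N.
  apply/subsetP => y; rewrite !inE.
  case: (eqVneq y x) => [->|yx]; first by case: (x \in N); rewrite ?andbF.
  by case yN: (y \in N); rewrite ?andbF //= agree //; case: (y \in A').
apply: leq_trans (subset_leq_card sub) _.
case xN: (x \in N); first by rewrite (setIidPl _) ?cards1 // sub1set.
rewrite (_ : _ :&: _ = set0) ?cards0 //.
by apply/setP => y; rewrite !inE; case: eqP => // ->.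
Qed.

Section SwapAt.
Variables (n r p : nat) (i0 : 'I_n).
Local Notation S := (psubsets n r p).
Implicit Types (B : {ffun 'I_n -> {set 'I_r}}) (a b : 'I_r).

Definition swap_at a b B : {ffun 'I_n -> {set 'I_r}} :=
  [ffun i => if i == i0 then tperm a b @^-1: B i else B i].

Lemma swap_at_mem a b B k : (k \in swap_at a b B i0) = (tperm a b k \in B i0).
Proof. by rewrite ffunE eqxx inE. Qed.

Lemma swap_at_ne a b B i : i != i0 -> swap_at a b B i = B i.
Proof. by rewrite ffunE => /negbTE ->. Qed.

Lemma swap_atK a b : involutive (swap_at a b).
Proof.
move=> B; apply/ffunP=> i; case: (eqVneq i i0) => [->|ne].
  by apply/setP=> k; rewrite !swap_at_mem tpermK.
by rewrite !swap_at_ne.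
Qed.

Lemma swap_at_psubsets a b B : (swap_at a b B \in S) = (B \in S).
Proof.
rewrite !inE; apply: eq_forallb => i; case: (eqVneq i i0) => [->|ne].
  by rewrite ffunE eqxx card_preimset //; apply: perm_inj.
by rewrite swap_at_ne.
Qed.

Lemma big_swap_at (T : Type) (idx : T) (op : Monoid.com_law idx) a b
    (F : {ffun 'I_n -> {set 'I_r}} -> T) :
  \big[op/idx]_(B in S) F B = \big[op/idx]_(B in S) F (swap_at a b B).
Proof.
rewrite (reindex_inj (inv_inj (swap_atK a b))) /=.
by apply: eq_bigl => B; rewrite swap_at_psubsets.
Qed.

Definition nb_mem a : nat := \sum_(B in S) (a \in B i0).
Definition nb_mem_nmem a b : nat := \sum_(B in S) ((a \in B i0) && (b \notin B i0)).

Lemma card_psubsets B i : B \in S -> #|B i| = p.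
Proof. by rewrite inE => /forallP /(_ i) /eqP. Qed.

Lemma card_psubsetsC B i : B \in S -> #|~: B i| = (r - p)%N.
Proof. by move=> BS; rewrite cardsCs setCK card_ord card_psubsets. Qed.

Lemma nb_mem_const a a' : nb_mem a = nb_mem a'.
Proof.
rewrite /nb_mem (big_swap_at _ a a'); apply: eq_bigr => B _.
by rewrite swap_at_mem tpermL.
Qed.

Lemma nb_memE a : (r * nb_mem a = #|S| * p)%N.
Proof.
have -> : (r * nb_mem a = \sum_a' nb_mem a')%N.
  by rewrite (eq_bigr _ (fun a' _ => nb_mem_const a' a)) sum_nat_const card_ord.
rewrite exchange_big /= -sum_nat_const; apply: eq_bigr => B BS.
by rewrite sum_mem_card card_psubsets.
Qed.

Lemma nb_mem_nmem_const a b b' :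
  b != a -> b' != a -> nb_mem_nmem a b = nb_mem_nmem a b'.
Proof.
move=> ba b'a; rewrite /nb_mem_nmem (big_swap_at _ b b'); apply: eq_bigr => B _.
by rewrite !swap_at_mem tpermL tpermD.
Qed.

Lemma nb_mem_nmemE a b :
  b != a -> ((r - 1) * nb_mem_nmem a b = (r - p) * nb_mem a)%N.
Proof.
move=> ba.
have -> : ((r - 1) * nb_mem_nmem a b = \sum_b' nb_mem_nmem a b')%N.
  rewrite (bigD1 a) //= [nb_mem_nmem a a]big1 => [|B _]; last by case: (a \in B i0).
  rewrite add0n (eq_bigr _ (fun b' b'a => esym (nb_mem_nmem_const ba b'a))).
  by rewrite sum_nat_const cardC1 card_ord subn1.
rewrite exchange_big /= /nb_mem big_distrr /=; apply: eq_bigr => B BS.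
case: (a \in B i0) => /=; last by rewrite big1 ?muln0.
rewrite muln1 -(card_psubsetsC i0 BS) -sum_mem_card.
by apply: eq_bigr => b' _; rewrite inE.
Qed.

Lemma nb_mem_nmem_count a b : b != a ->
  (r * (r - 1) * nb_mem_nmem a b = #|S| * (p * (r - p)))%N.
Proof.
move=> ba; rewrite -mulnA nb_mem_nmemE // mulnCA nb_memE.
by rewrite mulnCA [((_ - p) * p)%N]mulnC.
Qed.
End SwapAt.

Section Blocks.
Variables (V : finType) (n r : nat) (w : 'I_n * 'I_r -> V).
Hypothesis w_inj : injective w.
Implicit Types (B : {ffun 'I_n -> {set 'I_r}}).

Lemma mem_T_of B i j : (w (i, j) \in T_of w B) = (j \in B i).
Proof.
rewrite inE; apply/existsP/idP => [[i' /existsP [j' /andP [jB]]] | jB].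
  by move=> /eqP /w_inj [<- <-].
by exists i; apply/existsP; exists j; rewrite jB eqxx.
Qed.

Lemma mem_T_of_swap_at i0 a b B i k : (i, k) != (i0, a) -> (i, k) != (i0, b) ->
  (w (i, k) \in T_of w (swap_at i0 a b B)) = (w (i, k) \in T_of w B).
Proof.
rewrite !mem_T_of; case: (eqVneq i i0) => [-> | ne _ _]; last by rewrite swap_at_ne.
by rewrite !xpair_eqE eqxx /= swap_at_mem => ka kb; rewrite tpermD // eq_sym.
Qed.

Lemma card_blockOf_setI i0 j0 (A : {set V}) :
  #|blockOf w (w (i0, j0)) :&: A| = #|[set j | w (i0, j) \in A]|.
Proof.
have inj_row : injective (fun j => w (i0, j)) by move=> j1 j2 /w_inj [].
rewrite -(card_imset _ inj_row); apply: eq_card => x; rewrite !inE.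
apply/andP/imsetP => [[/existsP [i /existsP [j /existsP [j' /andP [Ej Ej']]]] xA]|].
  by move: Ej Ej' => /eqP /w_inj [-> _] /eqP Ex; exists j'; rewrite ?inE Ex.
move=> [j']; rewrite inE => j'A ->; split => //.
apply/existsP; exists i0; apply/existsP; exists j0.
by apply/existsP; exists j'; rewrite !eqxx.
Qed.
End Blocks.

Section Vertex.
Variables (R : realFieldType) (V : finType) (e : rel V) (n p q : nat).
Local Notation r := (p + q)%N.
Local Notation S := (psubsets n r p).
Variables (w : 'I_n * 'I_r -> V) (i0 : 'I_n) (j0 : 'I_r) (fv : {set V} -> R) (Kv : R).
Local Notation v := (w (i0, j0)).
Local Notation g B := (fv (T_of w B :&: nbhd e v)).
Hypotheses (w_bij : bijective w) (e_irr : irreflexive e).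
Hypotheses (Kv_ge0 : 0 <= Kv) (fv_lip : lipschitz e fv Kv v).

Let w_inj : injective w := bij_inj w_bij.

Lemma sum_sigma_swap_at :
  \sum_(B in S) sigma R p q (T_of w B) v * g B =
  \sum_(j : 'I_r) \sum_(B in S)
     if (j0 \in B i0) && (j \notin B i0) then g B - g (swap_at i0 j0 j B) else 0.
Proof.
have split_swap j : \sum_(B in S)
      (if (j0 \in B i0) && (j \notin B i0) then g B - g (swap_at i0 j0 j B) else 0) =
    \sum_(B in S) (if (j0 \in B i0) && (j \notin B i0) then g B else 0)
    - \sum_(B in S) (if (j \in B i0) && (j0 \notin B i0) then g B else 0).
  rewrite [X in _ - X](big_swap_at p i0 _ j0 j) -sumrB; apply: eq_bigr => B _.
  by rewrite !swap_at_mem tpermL tpermR; case: ifP; rewrite ?subr0.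
under [RHS]eq_bigr do rewrite split_swap.
rewrite sumrB exchange_big [X in _ - X]exchange_big -sumrB; apply: eq_bigr => B BS.
rewrite /sigma (mem_T_of w_inj); case: (j0 \in B i0) => /=.
  rewrite [X in _ - X]big1 ?subr0 => [|j _]; last by rewrite andbF.
  by rewrite sum_if_const -cardsE (card_psubsetsC _ BS) addKn.
rewrite big1 // (eq_bigr (fun j => if j \in B i0 then g B else 0)) => [|j _].
  by rewrite sum_if_const (eq_card (B := B i0)) // (card_psubsets _ BS) sub0r mulNr.
by rewrite andbT.
Qed.

Lemma lipschitz_swap_at B j :
  `|g B - g (swap_at i0 j0 j B)| <= Kv * (e v (w (i0, j)))%:R / (deg e v)%:R.
Proof.
apply: le_trans (fv_lip (subsetIr _ _) (subsetIr _ _)) _.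
rewrite ler_wpM2r ?invr_ge0 ?ler0n // ler_wpM2l // ler_nat.
have -> : e v (w (i0, j)) = (w (i0, j) \in nbhd e v) by rewrite inE.
apply: card_symdiff_setI_le => y; case: w_bij => winv _ winvK.
rewrite -[y]winvK [winv y]surjective_pairing inE => ey yj.
apply/esym/mem_T_of_swap_at => //; last by apply: contraNneq yj => ->.
by apply: contraTneq ey => ->; rewrite e_irr.
Qed.

Lemma norm_sum_sigma_le :
  (r * (r - 1))%:R * `|\sum_(B in S) sigma R p q (T_of w B) v * g B| <=
  (#|S| * (p * q))%:R * (#|blockOf w v :&: nbhd e v|%:R / (deg e v)%:R * Kv).
Proof.
pose c j := Kv * (e v (w (i0, j)))%:R / (deg e v)%:R.
have c_ge0 j : 0 <= c j by rewrite /c !mulr_ge0 ?invr_ge0 ?ler0n.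
have term j : (r * (r - 1))%:R * `|\sum_(B in S)
      if (j0 \in B i0) && (j \notin B i0) then g B - g (swap_at i0 j0 j B) else 0|
    <= (#|S| * (p * q))%:R * c j.
  have -> : (#|S| * (p * q))%:R * c j =
      (r * (r - 1))%:R * ((nb_mem_nmem p i0 j0 j)%:R * c j).
    have [->|jj0] := eqVneq j j0; first by rewrite /c e_irr !mulr0 mul0r !mulr0.
    by rewrite mulrA -natrM nb_mem_nmem_count // addKn.
  rewrite ler_wpM2l // natr_sum mulr_suml.
  apply: le_trans (ler_norm_sum _ _ _) _; apply: ler_sum => B _.
  by case: ifP => _; rewrite ?normr0 ?mul0r ?mul1r ?lipschitz_swap_at.
rewrite sum_sigma_swap_at.
apply: le_trans (ler_wpM2l (ler0n _ _) (ler_norm_sum _ _ _)) _.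
rewrite mulr_sumr; apply: le_trans (ler_sum _ (fun j _ => term j)) _.
rewrite -mulr_sumr (card_blockOf_setI w_inj).
suff -> : \sum_j c j = #|[set j | w (i0, j) \in nbhd e v]|%:R / (deg e v)%:R * Kv by [].
rewrite -sum_mem_card natr_sum !mulr_suml; apply: eq_bigr => j _.
by rewrite /c !inE [RHS]mulrC mulrA.
Qed.

End Vertex.

Theorem mainTheorem10 (R : realFieldType) (V : finType) (e : rel V)
    (n p q : nat) (f : V -> {set V} -> R) (K : V -> R)
    (w : 'I_n * 'I_(p + q) -> V) :
  (0 < n)%N -> (0 < p)%N -> (0 < q)%N ->
  symmetric e -> irreflexive e ->
  #|V| = ((p + q) * n)%N ->
  (forall v : V, exists u : V, e v u) ->
  (forall v : V, f v set0 = 0) ->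
  (forall v : V, 0 < K v) ->
  (forall v : V, lipschitz e (f v) (K v) v) ->
  bijective w ->
  `|expect_xi e f w| <=
    ((n * (p + q) * (p + q - 1))%:R)^-1 *
      \sum_(v : V) (#|blockOf w v :&: nbhd e v|)%:R / (deg e v)%:R * K v.
Proof.
move=> n_gt0 p_gt0 q_gt0 _ e_irr _ _ _ K_gt0 f_lip w_bij.
set S := psubsets n (p + q) p; set D := ((p + q) * (p + q - 1))%N.
set a := fun v => #|blockOf w v :&: nbhd e v|%:R / (deg e v)%:R * K v.
set Y := fun v => \sum_(B in S) sigma R p q (T_of w B) v * f v (T_of w B :&: nbhd e v).
have a_ge0 v : 0 <= a v by rewrite /a !mulr_ge0 ?invr_ge0 ?ler0n ?ltW.
have sum_Y : D%:R * \sum_v `|Y v| <= (#|S| * (p * q))%:R * \sum_v a v.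
  rewrite !mulr_sumr; apply: ler_sum => v _; case: (w_bij) => winv _ winvK.
  rewrite /Y /a -[v]winvK [winv v]surjective_pairing.
  exact: (norm_sum_sigma_le w_bij e_irr (ltW (K_gt0 _)) (f_lip _)).
rewrite /expect_xi /xi -/S -mulr_sumr exchange_big /=.
have [S0|S_neq0] := eqVneq #|S| 0%N.
  rewrite S0 invr0 mul0r normr0 mulr_ge0 ?invr_ge0 ?ler0n //.
  by apply: sumr_ge0 => v _; exact: a_ge0.
rewrite !normrM !normfV !normr_nat mulrA.
apply: (le_trans (y := #|S|%:R^-1 * (p * q * n)%:R^-1 *
                        (D%:R^-1 * ((#|S| * (p * q))%:R * \sum_v a v)))).
  rewrite ler_wpM2l ?mulr_ge0 ?invr_ge0 ?ler0n //.
  rewrite ler_pdivlMl ?ltr0n ?muln_gt0; last by lia.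
  exact: le_trans (ler_wpM2l (ler0n _ _) (ler_norm_sum _ _ _)) sum_Y.
rewrite le_eqVlt; apply/orP; left; apply/eqP.
rewrite /D !natrM; field.
by rewrite -natrD !pnatr_eq0 S_neq0 andbT; apply/and5P; split; apply/eqP; lia.
Qed.
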